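(* Let $\mathcal{F}:\mathcal{T}^Y\to\mathcal{T}^Z$ be a cover between trees of spheres, let $v$ be a vertex of $T^Z$ and $e\in E_v$ an edge of $T^Z$ containing $v$. Then $D_e=D_v$, where $D_v:=\sum_{v'\in F^{-1}(v)}\deg(v')$ and $D_e:=\sum_{e'\in F^{-1}(e)}\deg(e')$.
   Context: Trees are finite connected graphs without cycles (vertex set $V$, edges $2$-element subsets of $V$, $E_v$ the set of edges containing $v$); leaves are vertices of valence $1$, the others are internal vertices ($IV$). A tree marked by a finite set $X$ ($\ge3$ elements) is a tree whose set of leaves is $X$. A tree of spheres $\mathcal{T}^X$ consists of a tree $T^X$ marked by $X$ and, for each internal vertex $v$, a topological $2$-sphere $\mathcal{S}_v$ and an injection $i_v:E_v\to\mathcal{S}_v$; $X_v:=i_v(E_v)$. A cover $\mathcal{F}:\mathcal{T}^Y\to\mathcal{T}^Z$ consists of a map $F:T^Y\to T^Z$ sending vertices to vertices and each edge $\{v,w\}$ to the edge $\{F(v),F(w)\}$, with $F(Y)\subseteq Z$ and $F(IV^Y)\subseteq IV^Z$, and for each $v\in IV^Y$, $w=F(v)$, a topological branched covering $f_v:\mathcal{S}_v\to\mathcal{S}_w$ such that (a) $f_v:\mathcal{S}_v\setminus Y_v\to\mathcal{S}_w\setminus Z_w$ is a covering map, (b) $f_v\circ i_v=i_w\circ F$ on $E_v$, (c) for an edge $e=\{v_1,v_2\}$ between internal vertices, $\deg_{i_{v_1}(e)}f_{v_1}=\deg_{i_{v_2}(e)}f_{v_2}$. Degrees: $\deg(v)=\deg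 f_v$ for internal $v$; for an edge $e$ with an internal endpoint $v$, $\deg(e)=\deg_{i_v(e)}f_v$ (well defined by (c)); for a leaf $y$ with its edge $e$, $\deg(y)=\deg(e)$. *)

From HB Require Import structures.
From mathcomp Require Import all_boot all_order all_algebra.
From mathcomp Require Import all_classical all_reals all_analysis.
From mathcomp Require Import Rstruct Rstruct_topology.
Set Implicit Arguments. Unset Strict Implicit. Unset Printing Implicit Defensive.
Import Order.TTheory GRing.Theory Num.Theory.
Local Open Scope classical_set_scope.
Local Open Scope ring_scope.

Notation RR := Rdefinitions.R.

Definition homeo {X Y : topologicalType} (A : set X) (B : set Y) (phi : X -> Y) : Prop :=
  [/\ {within A, continuous phi}, (forall x, A x -> B (phi x)) &
   exists psi : Y -> X,
     [/\ {within B, continuous psi}, (forall y, B y -> A (psi y)),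
         (forall x, A x -> psi (phi x) = x) & (forall y, B y -> phi (psi y) = y)]].

Definition sphere2 : set ((RR * RR) * RR) :=
  [set p | p.1.1 ^+ 2 + p.1.2 ^+ 2 + p.2 ^+ 2 = 1].

Definition is_sphere (S : topologicalType) : Prop :=
  exists phi : S -> (RR * RR) * RR, homeo setT sphere2 phi.

(* the complex plane as R^2, with complex multiplication and powers *)
Definition cmul (z w : RR * RR) : RR * RR :=
  (z.1 * w.1 - z.2 * w.2, z.1 * w.2 + z.2 * w.1).
Definition cpow (z : RR * RR) (d : nat) : RR * RR := iter d (cmul z) (1, 0).
Definition disk : set (RR * RR) := [set z | z.1 ^+ 2 + z.2 ^+ 2 < 1].

Definition local_deg {S T : topologicalType} (f : S -> T) (x : S) (d : nat) : Prop :=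
  (0 < d)%N /\
  exists (U : set S) (V : set T) (phi : S -> RR * RR) (psi : T -> RR * RR),
    [/\ [/\ open U, U x, open V & f @` U `<=` V],
        homeo U disk phi /\ homeo V disk psi,
        phi x = (0, 0), psi (f x) = (0, 0) &
        forall u, U u -> psi (f u) = cpow (phi u) d].

Definition ldeg {S T : topologicalType} (f : S -> T) (x : S) : nat :=
  xget 0%N [set d | local_deg f x d].

Definition branched_cover {S T : topologicalType} (f : S -> T) : Prop :=
  continuous f /\ forall x, exists d, local_deg f x d.

Definition fiber_card {S T : topologicalType} (f : S -> T) (y : T) (d : nat) : Prop :=
  exists s : seq S, [/\ uniq s, (forall x, f x = y <-> x \in s) & size s = d].

Definition bdeg {S T : topologicalType} (f : S -> T) : nat :=
  xget 0%N [set d | exists B : set T, finite_set B /\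
                       forall y, ~ B y -> fiber_card f y d].

Definition covering_on {X Y : topologicalType} (p : X -> Y) (A : set X) (B : set Y) : Prop :=
  (forall x, A x -> B (p x)) /\
  forall y, B y -> exists V : set Y,
    [/\ open V, V y, V `<=` B &
     exists (I : Type) (U : I -> set X),
       [/\ (forall i, open (U i)),
           (forall i j, i <> j -> U i `&` U j = set0),
           A `&` p @^-1` V = \bigcup_(i in setT) U i &
           (forall i, homeo (U i) V p)]].

Local Close Scope classical_set_scope.

Definition Ev {V : finType} (E : {set {set V}}) (v : V) : {set {set V}} :=
  [set a in E | v \in a].

Definition adj {V : finType} (E : {set {set V}}) : rel V :=
  fun x y => [set x; y] \in E.

Definition is_tree {V : finType} (E : {set {set V}}) : Prop :=
  [/\ (forall a, a \in E -> #|a| = 2%N),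
      (forall x y : V, connect (adj E) x y) &
      ~ (exists s : seq V, [/\ (3 <= size s)%N, uniq s & cycle (adj E) s])].

Definition leaves {V : finType} (E : {set {set V}}) : {set V} :=
  [set v | #|Ev E v| == 1%N].

Record tree_of_spheres := TreeOfSpheres {
  tV : finType;
  tE : {set {set tV}};
  tX : {set tV};
  tS : tV -> topologicalType;              (* S_v, for internal v *)
  ti : forall v : tV, {set tV} -> tS v;    (* i_v, meaningful on E_v *)
  tree_ax : is_tree tE;
  mark_ax : leaves tE = tX;
  card_ax : (3 <= #|tX|)%N;
  sphere_ax : forall v, v \notin tX -> is_sphere (tS v);
  inj_ax : forall v, v \notin tX -> {in Ev tE v &, injective (ti v)}
}.

Definition Xv (T : tree_of_spheres) (v : tV T) : set (tS v) :=
  fun z => exists2 a, a \in Ev (tE T) v & @ti _ v a = z.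

Record tcover (TY TZ : tree_of_spheres) := Cover {
  cF : tV TY -> tV TZ;
  cf : forall v : tV TY, tS v -> tS (cF v);
  edge_ax : forall a, a \in tE TY -> cF @: a \in tE TZ;
  leaf_ax : forall y, y \in tX TY -> cF y \in tX TZ;
  int_ax : forall v, v \notin tX TY -> cF v \notin tX TZ;
  bc_ax : forall v, v \notin tX TY -> branched_cover (@cf v);
  cov_ax : forall v, v \notin tX TY ->
     covering_on (@cf v) (~` @Xv _ v)%classic (~` @Xv _ (cF v))%classic;
  compat_ax : forall v, v \notin tX TY -> forall a, a \in Ev (tE TY) v ->
     @cf v (@ti _ v a) = @ti _ (cF v) (cF @: a);
  deg_ax : forall v1 v2, v1 \notin tX TY -> v2 \notin tX TY ->
     [set v1; v2] \in tE TY ->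
     ldeg (@cf v1) (@ti _ v1 [set v1; v2]) =
     ldeg (@cf v2) (@ti _ v2 [set v1; v2])
}.

Section Degrees.
Variables (TY TZ : tree_of_spheres) (C : tcover TY TZ).

Definition edge_deg (a : {set tV TY}) : nat :=
  match [pick v in a | v \notin tX TY] with
  | Some v => ldeg (@cf _ _ C v) (@ti _ v a)
  | None => 0%N
  end.

Definition vertex_deg (v : tV TY) : nat :=
  if v \notin tX TY then bdeg (@cf _ _ C v)
  else match [pick a in Ev (tE TY) v] with
       | Some a => edge_deg a
       | None => 0%N
       end.

Definition Dv (w : tV TZ) : nat := \sum_(v' | cF C v' == w) vertex_deg v'.
Definition De (e : {set tV TZ}) : nat :=
  \sum_(e' in tE TY | cF C @: e' == e) edge_deg e'.

End Degrees.

(* Every edge of T^Y over e has exactly one endpoint over v, so D_e splits as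
   a sum, over the vertices v' above v, of the degrees of the edges at v' lying
   over e.  At a leaf v' this is its unique edge, whose degree is deg(v').  At
   an internal v' these edges are marked by the points of the fiber of f_v'
   over the marked point i_v(e), since f_v' is a covering off the marked points;
   so their degrees add up to deg f_v', because for a branched covering of
   spheres the local degrees along any fiber sum to the degree.  The latter
   follows from the local model z |-> z^d: the sum of the local degrees over the
   fiber of y counts the preimages of every point near y, hence is locally
   constant, hence constant on the connected target, and equal to the number of
   preimages of a generic point. *)

From HB Require Import structures.
From mathcomp Require Import all_boot all_order all_algebra all_field.
From mathcomp Require Import finmap.
From mathcomp Require Import all_classical all_reals all_analysis.
From mathcomp Require Import Rstruct Rstruct_topology.
From mathcomp Require Import complex.
From mathcomp Require Import ring lra.
Set Implicit Arguments. Unset Strict Implicit. Unset Printing Implicit Defensive.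
Import Order.TTheory GRing.Theory Num.Theory.
Local Open Scope classical_set_scope.
Local Open Scope ring_scope.

Definition csqnorm (z : RR * RR) : RR := z.1 ^+ 2 + z.2 ^+ 2.

Lemma csqnorm_ge0 z : 0 <= csqnorm z.
Proof. by rewrite addr_ge0 // sqr_ge0. Qed.

Lemma csqnorm0 : csqnorm (0, 0) = 0.
Proof. by rewrite /csqnorm /= expr0n addr0. Qed.

Lemma csqnorm_eq0 z : csqnorm z = 0 -> z = (0, 0).
Proof.
case: z => a b; rewrite /csqnorm /= => /eqP.
by rewrite paddr_eq0 ?sqr_ge0 // !sqrf_eq0 => /andP[/eqP-> /eqP->].
Qed.

Lemma csqnorm_mul z w : csqnorm (cmul z w) = csqnorm z * csqnorm w.
Proof. by rewrite /csqnorm /cmul /=; ring. Qed.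

Lemma cpowS z d : cpow z d.+1 = cmul z (cpow z d).
Proof. by []. Qed.

Lemma csqnorm_cpow z d : csqnorm (cpow z d) = csqnorm z ^+ d.
Proof.
elim: d => [|d IH]; first by rewrite /csqnorm /= expr1n expr0n addr0.
by rewrite cpowS csqnorm_mul IH exprS.
Qed.

Lemma cpow_eq0 z d : (0 < d)%N -> cpow z d = (0, 0) -> z = (0, 0).
Proof.
move=> d_gt0 zd0; apply: csqnorm_eq0; apply/eqP.
by have /esym/eqP := csqnorm_cpow z d; rewrite zd0 csqnorm0 expf_eq0 d_gt0.
Qed.

Lemma csqnorm_cpow_lt z d r : (0 < d)%N -> 0 <= r ->
  csqnorm (cpow z d) < r ^+ d -> csqnorm z < r.
Proof.
move=> d_gt0 r_ge0; rewrite csqnorm_cpow; apply: contra_ltT; rewrite -!leNgt.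
by apply: lerXn2r; rewrite ?nnegrE ?csqnorm_ge0.
Qed.

Local Open Scope complex_scope.

Definition toC (z : RR * RR) : RR[i] := Complex z.1 z.2.
Definition ofC (x : RR[i]) : RR * RR := let: Complex a b := x in (a, b).

Lemma toCK : cancel toC ofC. Proof. by case. Qed.
Lemma ofCK : cancel ofC toC. Proof. by case. Qed.

Lemma toC_cpow z d : toC (cpow z d) = (toC z ^+ d)%R.
Proof.
elim: d => [|d IH] //; rewrite cpowS exprS -IH.
by case: z {IH} => a b; case: (cpow _ d).
Qed.

Local Close Scope complex_scope.

(* In RR[i] the polynomial X^d - c splits, with simple roots since c != 0. *)
Lemma cpow_roots (c : RR * RR) (d : nat) : (0 < d)%N -> c <> (0, 0) ->
  exists s : seq (RR * RR),
    [/\ uniq s, size s = d & forall z, cpow z d = c <-> z \in s].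
Proof.
move=> d_gt0 c_neq0.
have cC_neq0 : toC c != 0 by apply: contra_notN c_neq0 => /eqP cC0; rewrite -[c]toCK cC0.
pose p : {poly RR[i]} := 'X^d - (toC c)%:P.
have [r] := closed_field_poly_normal p.
rewrite (monicP (monicXnsubC _ d_gt0)) scale1r => p_def.
have p_sep : separable_poly p.
  rewrite unlock; apply/Pdiv.ClosedField.coprimepP => x /rootP/eqP.
  rewrite hornerD hornerN hornerXn hornerC subr_eq0 => /eqP xd.
  rewrite derivB derivXn derivC subr0 hornerMn hornerXn -mulr_natr.
  rewrite mulf_neq0 ?pnatr_eq0 -?lt0n //.
  apply: contra cC_neq0 => /eqP x0; rewrite -xd.
  by case: d d_gt0 {p p_def xd} x0 => // d _ x0; rewrite exprS x0 mulr0.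
exists (map ofC r); split.
- rewrite (map_inj_uniq (can_inj ofCK)) -separable_prod_XsubC -p_def //.
- have : size p = (size r).+1 by rewrite p_def size_prod_XsubC.
  by rewrite size_XnsubC // size_map => -[].
- move=> z; rewrite -[z in z \in _]toCK (mem_map (can_inj ofCK)).
  rewrite -root_prod_XsubC -p_def /root hornerD hornerN hornerXn hornerC subr_eq0 -toC_cpow.
  by split => [->|/eqP /(can_inj toCK)].
Qed.

Lemma continuous_fst (X Y : topologicalType) : continuous (@fst X Y).
Proof. by case=> x y; apply: cvg_fst. Qed.

Lemma continuous_snd (X Y : topologicalType) : continuous (@snd X Y).
Proof. by case=> x y; apply: cvg_snd. Qed.

Lemma continuous_pair (X Y Z : topologicalType) (f : X -> Y) (g : X -> Z) :
  continuous f -> continuous g -> continuous (fun x => (f x, g x)).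
Proof. by move=> f_cont g_cont x; apply: cvg_pair; [apply: f_cont | apply: g_cont]. Qed.

Lemma continuous_addR (T : topologicalType) (f g : T -> RR) :
  continuous f -> continuous g -> continuous (fun x => f x + g x).
Proof.
by move=> f_cont g_cont x; apply: (@cvgD RR RR^o T (nbhs x) _ f g _ _ (f_cont x) (g_cont x)).
Qed.

Lemma continuous_mulR (T : topologicalType) (f g : T -> RR) :
  continuous f -> continuous g -> continuous (fun x => f x * g x).
Proof.
by move=> f_cont g_cont x; apply: (@cvgM RR T (nbhs x) _ f g _ _ (f_cont x) (g_cont x)).
Qed.

Lemma continuous_sqr (T : topologicalType) (f : T -> RR) :
  continuous f -> continuous (fun x => f x ^+ 2).
Proof. by move=> f_cont; apply: continuous_mulR. Qed.

Lemma csqnorm_continuous : continuous csqnorm.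
Proof.
by apply: continuous_addR; apply: continuous_sqr;
  [apply: continuous_fst | apply: continuous_snd].
Qed.

Lemma open_csqnorm_lt (r : RR) : open [set z | csqnorm z < r].
Proof.
by apply: (@open_comp _ _ csqnorm [set y | y < r]);
  [move=> z _; apply: csqnorm_continuous | apply: open_lt].
Qed.

Lemma open_separated_continuous (X Y : topologicalType) (f : X -> Y) (x y : X) :
  continuous f -> hausdorff_space Y -> f x != f y ->
  exists2 AB : set X * set X, x \in AB.1 /\ y \in AB.2 &
    [/\ open AB.1, open AB.2 & AB.1 `&` AB.2 == set0].
Proof.
move=> f_cont; rewrite open_hausdorff => hY /hY [[A B] /=].
rewrite !inE => -[fxA fyB] [oA oB AB0].
exists (f @^-1` A, f @^-1` B); rewrite /= ?inE //.
split; [exact: open_comp | exact: open_comp |].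
by apply/eqP; rewrite -preimage_setI AB0 preimage_set0.
Qed.

Lemma hausdorff_continuous_inj (X Y : topologicalType) (f : X -> Y) :
  continuous f -> injective f -> hausdorff_space Y -> hausdorff_space X.
Proof.
move=> f_cont f_inj hY; rewrite open_hausdorff => x y xy.
by apply: open_separated_continuous f_cont hY _; apply: contra_neq xy; apply: f_inj.
Qed.

Lemma hausdorff_prod (X Y : topologicalType) :
  hausdorff_space X -> hausdorff_space Y -> hausdorff_space (X * Y)%type.
Proof.
move=> hX hY; rewrite open_hausdorff => -[x1 y1] [x2 y2] neq.
have [x12|nx] := eqVneq x1 x2.
- apply: (open_separated_continuous (@continuous_snd X Y) hY).
  by apply: contraNneq neq => /= ->; rewrite x12.
- exact: (open_separated_continuous (@continuous_fst X Y) hX).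
Qed.

Lemma connected_perfect (T : topologicalType) (a b : T) :
  hausdorff_space T -> connected [set: T] -> a <> b -> perfect_set [set: T].
Proof.
move=> hT cT ab; apply/perfectTP => y oy.
have cy : closed [set y] by apply/accessible_closed_set1/hausdorff_accessible.
have yT : [set y] = [set: T].
  by apply: cT; [exists y | exists [set y]; rewrite ?setTI | exists [set y]; rewrite ?setTI].
have [ya yb] : [set y] a /\ [set y] b by rewrite yT.
by apply: ab; rewrite ya yb.
Qed.

Lemma sphere2_closed : closed sphere2.
Proof.
have -> : sphere2 = (fun p => csqnorm p.1 + p.2 ^+ 2) @^-1` [set 1] by [].
apply: preimage_closed; last by apply/accessible_closed_set1/hausdorff_accessible/Rhausdorff.
move=> p _; apply: continuous_addR => {}p.
- by apply: continuous_comp; [exact: continuous_fst | exact: csqnorm_continuous].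
- exact: (continuous_sqr (@continuous_snd _ _)).
Qed.

Lemma sqr_le1 (a : RR) : a ^+ 2 <= 1 -> -1 <= a <= 1.
Proof. by move=> a2; apply/andP; split; nra. Qed.

Lemma sphere2_compact : compact sphere2.
Proof.
pose I : set RR := [set` `[(-1 : RR), 1]].
apply: (subclosed_compact sphere2_closed (B := (I `*` I) `*` I)).
  by apply: compact_setX; [apply: compact_setX|]; apply: segment_compact.
move=> [[a b] c]; rewrite /sphere2 /= => abc1.
have a2 : a ^+ 2 <= 1 by rewrite -abc1 -addrA lerDl addr_ge0 ?sqr_ge0.
have b2 : b ^+ 2 <= 1 by rewrite -abc1 addrAC lerDr addr_ge0 ?sqr_ge0.
have c2 : c ^+ 2 <= 1 by rewrite -abc1 lerDr addr_ge0 ?sqr_ge0.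
by split; [split|]; rewrite /I /= in_itv /=; apply: sqr_le1.
Qed.

Definition meridian (q : RR * RR) (t : RR) : (RR * RR) * RR :=
  ((q.1 * sin t, q.2 * sin t), cos t).

Lemma continuous_meridian q : continuous (meridian q).
Proof.
apply: continuous_pair; last exact: continuous_cos.
by apply: continuous_pair; apply: continuous_mulR;
  [exact: cst_continuous | exact: continuous_sin | exact: cst_continuous | exact: continuous_sin].
Qed.

(* A point of height c lies on the meridian through its horizontal direction,
   at t = acos c; at the poles any direction will do. *)
Lemma sphere2_meridians :
  sphere2 = \bigcup_(q in [set q | csqnorm q = 1]) (meridian q @` [set` `[0, pi]]).
Proof.
apply/seteqP; split; last first.
  move=> p [q /= q1 [t _ <-]]; rewrite /sphere2 /meridian /= !exprMn -mulrDl.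
  by move: q1; rewrite /csqnorm => ->; rewrite mul1r addrC cos2Dsin2.
move=> [[a b] c]; rewrite /sphere2 /= => abc1.
have c1 : c \in `[(-1 : RR), 1].
  by rewrite in_itv; apply: sqr_le1; rewrite -abc1 lerDr addr_ge0 ?sqr_ge0.
pose t := acos c.
have t_pi : [set` `[0, pi]] t by rewrite /= in_itv /= acos_ge0 // acos_lepi.
have ct : cos t = c by rewrite acosK.
have st2 : sin t ^+ 2 = a ^+ 2 + b ^+ 2 by rewrite sin2cos2 ct -abc1; ring.
have [st0|st_neq0] := eqVneq (sin t) 0.
- have /csqnorm_eq0 [-> ->] : csqnorm (a, b) = 0 by rewrite /csqnorm -st2 st0 expr0n.
  exists (1, 0); first by rewrite /csqnorm /= expr1n expr0n addr0.
  by exists t => //; rewrite /meridian /= st0 ct !mulr0.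
- exists (a / sin t, b / sin t).
    by rewrite /csqnorm /= !expr_div_n -mulrDl -st2 divff // expf_neq0.
  by exists t => //; rewrite /meridian /= ct !divfK.
Qed.

Lemma sphere2_connected : connected sphere2.
Proof.
rewrite sphere2_meridians; apply: bigcup_connected.
  exists ((0, 0), 1) => q _; exists 0; first by rewrite /= in_itv /= lexx pi_ge0.
  by rewrite /meridian sin0 cos0 !mulr0.
move=> q _; apply: connected_continuous_connected; first exact: segment_connected.
exact/continuous_subspaceT/continuous_meridian.
Qed.

Section TopologicalSphere.
Variables (X : topologicalType) (X_sphere : is_sphere X).

Lemma sphere_image : exists psi : (RR * RR) * RR -> X,
  {within sphere2, continuous psi} /\ [set: X] = psi @` sphere2.
Proof.
have [phi [_ phiS [psi [cpsi _ phiK _]]]] := X_sphere.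
exists psi; split => //; apply/seteqP; split => // x _.
by exists (phi x); [apply: phiS | apply: phiK].
Qed.

Lemma sphere_hausdorff : hausdorff_space X.
Proof.
have [phi [cphi _ [psi [_ _ phiK _]]]] := X_sphere.
apply: (hausdorff_continuous_inj (f := phi)).
- exact/continuous_subspace_setT.
- by move=> x y; rewrite -{2}(phiK x I) -{2}(phiK y I) => ->.
- by apply: hausdorff_prod; [apply: hausdorff_prod|]; apply: Rhausdorff.
Qed.

Lemma sphere_compact : compact [set: X].
Proof.
by have [psi [cpsi ->]] := sphere_image; apply: continuous_compact cpsi sphere2_compact.
Qed.

Lemma sphere_connected : connected [set: X].
Proof.
have [psi [cpsi ->]] := sphere_image.
exact: connected_continuous_connected sphere2_connected cpsi.
Qed.

Lemma sphere_perfect : perfect_set [set: X].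
Proof.
have [phi [_ _ [psi [_ _ _ psiK]]]] := X_sphere.
have north : sphere2 ((0, 0), 1) by rewrite /sphere2 /= expr0n expr1n !add0r.
have south : sphere2 ((0, 0), -1) by rewrite /sphere2 /= expr0n sqrrN expr1n !add0r.
apply: (connected_perfect (a := psi ((0, 0), 1)) (b := psi ((0, 0), -1)));
  [exact: sphere_hausdorff | exact: sphere_connected |].
by move=> /(congr1 phi); rewrite !psiK // => -[]; lra.
Qed.

End TopologicalSphere.

Lemma disk_open : open disk.
Proof. exact: open_csqnorm_lt. Qed.

Lemma disk0 : disk (0, 0).
Proof. by rewrite /disk /= expr0n addr0 ltr01. Qed.

Lemma nbhs0_csqnorm (A : set (RR * RR)) : nbhs ((0, 0) : RR * RR) A ->
  exists2 r : RR, 0 < r & forall z, csqnorm z < r -> A z.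
Proof.
move=> /nbhs_ballP [e e_gt0 eA]; exists (e ^+ 2); first by rewrite exprn_gt0.
move=> [a b]; rewrite /csqnorm /= => ab_lt; apply: eA.
have a_lt : a ^+ 2 < e ^+ 2 by apply: le_lt_trans ab_lt; rewrite lerDl sqr_ge0.
have b_lt : b ^+ 2 < e ^+ 2 by apply: le_lt_trans ab_lt; rewrite lerDr sqr_ge0.
rewrite /ball /= /prod_ball /= /ball /= !sub0r !normrN.
by split; rewrite -(ltr_pXn2r (n := 2)) // ?nnegrE ?ltW // real_normK ?num_real.
Qed.

Section LocalDegree.
Variables (S T : topologicalType) (f : S -> T) (x : S) (d : nat).
Hypothesis fxd : local_deg f x d.

Lemma local_deg_isolated : exists2 U : set S, open U /\ U x &
  forall u, U u -> f u = f x -> u = x.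
Proof.
have [d_gt0 [U [V [phi [psi [[oU Ux _ _] [[_ _ [g [_ _ phiK _]]] _] phix psifx fE]]]]]] := fxd.
exists U => // u Uu fux.
have /(cpow_eq0 d_gt0) phiu : cpow (phi u) d = (0, 0) by rewrite -fE // fux psifx.
by rewrite -(phiK _ Uu) phiu -phix phiK.
Qed.

(* In the charts, the d preimages of a point near [f x] are the d-th roots of
   its image, all of which are close to 0 when that image is. *)
Lemma local_deg_fiber : exists2 U : set S, open U /\ U x &
  forall N : set S, open N -> N x -> N `<=` U ->
  exists2 W : set T, open W /\ W (f x) &
    forall w, W w -> w <> f x -> exists s : seq S,
      [/\ uniq s, size s = d & forall u, N u /\ f u = w <-> u \in s].
Proof.
have [d_gt0 [U [V [phi [psi [[oU Ux oV fUV] [[_ _ [g [cg gD phiK gK]]]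
  [cpsi _ [h [_ _ psiK _]]]] phix psifx fE]]]]]] := fxd.
have fU u : U u -> V (f u) by move=> Uu; apply: fUV; exists u.
exists U => // N oN Nx NU.
have [r r_gt0 rN] : exists2 r : RR, 0 < r & forall z, csqnorm z < r -> disk z /\ N (g z).
  apply/nbhs0_csqnorm/filterI; first exact: open_nbhs_nbhs (conj disk_open disk0).
  move: cg; rewrite continuous_open_subspace; last exact: disk_open.
  by move=> /(_ (0, 0) (mem_set disk0)); apply; rewrite -phix phiK //; apply: open_nbhs_nbhs.
have [W0 [oW0 W0fx] W0r] : exists2 W0 : set T, open W0 /\ W0 (f x) &
    forall w, W0 w -> csqnorm (psi w) < r ^+ d.
  move: cpsi; rewrite continuous_open_subspace // => /(_ (f x) (mem_set (fU _ Ux))).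
  have : nbhs (psi (f x)) [set c | csqnorm c < r ^+ d].
    by apply: open_nbhs_nbhs; split; [exact: open_csqnorm_lt | rewrite /= psifx csqnorm0 exprn_gt0].
  by move=> /[swap] /[apply]; rewrite nbhsE => -[W0 [oW0 W0fx] W0r]; exists W0.
exists (W0 `&` V); first by split; [exact: openI | split => //; apply: fU].
move=> w [W0w Vw] wfx.
have psiw_neq0 : psi w <> (0, 0).
  by move=> psiw0; apply: wfx; rewrite -(psiK _ Vw) psiw0 -psifx psiK //; apply: fU.
have [s [s_uniq s_size sE]] := cpow_roots d_gt0 psiw_neq0.
have sr z : z \in s -> csqnorm z < r.
  by move/sE => zd; apply: (csqnorm_cpow_lt d_gt0 (ltW r_gt0)); rewrite zd W0r.
exists (map g s); split.
- rewrite map_inj_in_uniq // => z1 z2 /sr/rN[z1D _] /sr/rN[z2D _] gz12.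
  by rewrite -(gK _ z1D) gz12 gK.
- by rewrite size_map.
move=> u; split => [[Nu fuw]|/mapP [z zs ->]].
  rewrite -(phiK _ (NU _ Nu)); apply/map_f/sE.
  by rewrite -fE ?fuw //; apply: NU.
have [zD Ngz] := rN _ (sr _ zs); split => //.
by rewrite -(psiK _ Vw) -(psiK _ (fU _ (gD _ zD))) fE ?gK //; [congr h; exact/sE | apply: gD].
Qed.

End LocalDegree.

Lemma uniq_flatten_disjoint (A X : eqType) (s : seq A) (t : A -> seq X) :
  uniq s -> {in s, forall x, uniq (t x)} ->
  {in s &, forall x y u, u \in t x -> u \in t y -> x = y} ->
  uniq (flatten (map t s)).
Proof.
elim: s => [|x s IH] //= /andP [xs s_uniq] t_uniq t_disj.
rewrite cat_uniq t_uniq ?mem_head // IH //; first last.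
- by move=> y z ys zs; apply: t_disj; rewrite inE ?ys ?zs orbT.
- by move=> y ys; apply: t_uniq; rewrite inE ys orbT.
rewrite andbT; apply/hasPn => u /flattenP [_ /mapP [y ys ->] uy]; apply/negP => ux.
have xy : x = y by apply: (t_disj x y) ux uy; rewrite ?mem_head // inE ys orbT.
by move: xs; rewrite xy ys.
Qed.

Definition pointed_at (S : topologicalType) (x : S) : Type := S.
HB.instance Definition _ (S : topologicalType) (x : S) :=
  Topological.copy (@pointed_at S x) S.
HB.instance Definition _ (S : topologicalType) (x : S) :=
  isPointed.Build (@pointed_at S x) x.

(* [compact_cover] is stated for pointed spaces; a nonempty set provides the point. *)
Lemma compact_cover_compact (S : topologicalType) (A : set S) :
  compact A -> cover_compact A.
Proof.
move=> A_compact; have [[x _]|nA] := pselect (A !=set0).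
  have : @compact (pointed_at x) A by [].
  by rewrite compact_cover.
by move=> I D F _ _; exists fset0 => // u Au; case: nA; exists u.
Qed.

Lemma big_setI_open (X : topologicalType) (I : eqType) (s : seq I) (P : pred I)
    (F : I -> set X) :
  (forall i, i \in s -> P i -> open (F i)) ->
  open (\big[setI/setT]_(i <- s | P i) F i).
Proof.
move=> oF; rewrite big_seq_cond.
by apply: big_ind => [|A B|i /andP[]]; [exact: openT | exact: openI | exact: oF].
Qed.

Lemma big_setI_seqP (X : Type) (I : choiceType) (s : seq I) (P : pred I)
    (F : I -> set X) (u : X) :
  (\big[setI/setT]_(i <- s | P i) F i) u <-> forall i, i \in s -> P i -> F i u.
Proof.
rewrite -bigcap_seq_cond; split => [sF i i_s Pi|sF i /andP[]]; last exact: sF.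
by apply: sF; rewrite /= i_s Pi.
Qed.

Lemma hausdorff_separate_seq (X : topologicalType) (s : seq X) :
  hausdorff_space X ->
  exists N : X -> set X, [/\ forall x, open (N x), {in s, forall x, N x x} &
    {in s &, forall x y, x != y -> N x `&` N y = set0}].
Proof.
rewrite open_hausdorff => hX.
have sep (p : X * X) : exists AB : set X * set X, p.1 != p.2 ->
    [/\ open AB.1, open AB.2, AB.1 p.1, AB.2 p.2 & AB.1 `&` AB.2 = set0].
  case: p => x y /=; have [->|/hX [AB]] := eqVneq x y.
    by exists (setT, setT) => /eqP.
  by rewrite !inE => -[xA yB] [oA oB AB0]; exists AB.
have [AB sepAB] := choice sep.
pose V x y := (AB (x, y)).1 `&` (AB (y, x)).2.
have V_sep x y : x != y -> [/\ open (V x y), V x y x & V x y `&` V y x = set0].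
  move=> xy; have yx : y != x by rewrite eq_sym.
  have [oA _ xA _ AB0] := sepAB (x, y) xy; have [_ oB _ xB _] := sepAB (y, x) yx.
  split; [exact: openI | by split |].
  by apply/seteqP; split => // u [[Au _] [_ Bu]]; rewrite -AB0.
exists (fun x => \big[setI/setT]_(y <- s | y != x) V x y); split.
- by move=> x; apply: big_setI_open => y _ yx; have [] := V_sep x y; rewrite // eq_sym.
- by move=> x _; apply/big_setI_seqP => y _ yx; have [] := V_sep x y; rewrite // eq_sym.
- move=> x y xs ys xy; apply/seteqP; split => // u [/big_setI_seqP Nx /big_setI_seqP Ny].
  have [_ _ <-] := V_sep x y xy.
  by split; [apply: Nx; rewrite // eq_sym | apply: Ny].
Qed.

Lemma fiber_card_unique (S T : topologicalType) (f : S -> T) y a b :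
  fiber_card f y a -> fiber_card f y b -> a = b.
Proof.
move=> [s [s_uniq sE <-]] [t [t_uniq tE <-]].
by apply/perm_size/uniq_perm => // x; apply/idP/idP => [/sE/tE|/tE/sE].
Qed.

Lemma fiber_card_partition (S T : topologicalType) (f : S -> T) (w : T)
    (s : seq S) (M : S -> set S) (t : S -> seq S) :
  uniq s -> {in s &, forall x y, x != y -> M x `&` M y = set0} ->
  (forall u, f u = w -> exists2 x, x \in s & M x u) ->
  {in s, forall x, uniq (t x) /\ forall u, M x u /\ f u = w <-> u \in t x} ->
  fiber_card f w (\sum_(x <- s) size (t x)).
Proof.
move=> s_uniq M_disj M_cover tE; exists (flatten (map t s)); split.
- apply: uniq_flatten_disjoint => // [x /tE[]//|x y xs ys u /(tE x xs).2 [Mxu _]].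
  move=> /(tE y ys).2 [Myu _]; apply/eqP; apply: contraT => xy.
  by have /seteqP[/(_ u (conj Mxu Myu))] := M_disj x y xs ys xy.
- move=> u; split => [fu|/flattenP [_ /mapP [x xs ->] /(tE x xs).2 [] //]].
  have [x xs Mxu] := M_cover u fu.
  by apply/flattenP; exists (t x); [apply: map_f | apply/(tE x xs).2].
- by rewrite size_flatten /shape -map_comp sumnE big_map.
Qed.

Lemma proper_fiber_nbhd (S T : topologicalType) (f : S -> T) (O : set S) (z : T) :
  compact [set: S] -> hausdorff_space T -> continuous f -> open O ->
  f @^-1` [set z] `<=` O ->
  exists2 W : set T, open W /\ W z & forall w, W w -> f @^-1` [set w] `<=` O.
Proof.
move=> S_compact hT f_cont oO zO; exists (~` (f @` ~` O)); last first.
  by move=> w nw u fuw; apply: contrapT => Ou; apply: nw; exists u.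
split; last by move=> [u /[swap] /zO].
apply: closed_openC; apply: compact_closed => //.
apply: (continuous_compact (continuous_subspaceT f_cont)).
exact: subclosed_compact (open_closedC oO) S_compact _.
Qed.

Lemma connected_locally_constant (T : topologicalType) (X : Type) (g : T -> X) :
  connected [set: T] ->
  (forall y, exists2 W : set T, open W /\ W y & forall w, W w -> g w = g y) ->
  forall y z, g y = g z.
Proof.
move=> T_conn g_loc y z.
have level_open (P : X -> Prop) : open [set w | P (g w)].
  rewrite openE => w Pw; have [W [oW Ww] Wg] := g_loc w.
  by apply: (@filterS _ _ _ W); [move=> u /Wg /= -> | exact: open_nbhs_nbhs (conj oW Ww)].
have : [set w | g w = g z] = [set: T].
  apply: T_conn; first by exists z.
    by exists [set w | g w = g z]; rewrite ?setTI //; exact: (level_open (eq^~ (g z))).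
  exists [set w | g w = g z]; rewrite ?setTI //.
  by rewrite -[X in closed X]setCK; apply/open_closedC/(level_open (fun x => x <> g z)).
by move=> /seteqP[_ /(_ y I)].
Qed.

Lemma perfect_cofinite_nonempty (T : topologicalType) (B : set T) (z : T) :
  hausdorff_space T -> perfect_set [set: T] -> finite_set B -> exists y, ~ B y.
Proof.
move=> hT /perfectTP T_perfect fB; apply: contrapT => allB; apply: (T_perfect z).
have -> : [set z] = ~` (B `\` [set z]).
  apply/seteqP; split => u; first by move=> -> [_]; apply.
  move=> nBu; apply: contrapT => uz; apply: nBu; split => //.
  by apply: contrapT => Bu; apply: allB; exists u.
apply: closed_openC; apply: (accessible_finite_set_closed.1 (hausdorff_accessible hT)).
by apply: (sub_finite_set _ fB) => u [].
Qed.

Section FiberDegreeSum.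
Variables (S T : topologicalType) (f : S -> T).
Hypotheses (S_hausdorff : hausdorff_space S) (S_compact : compact [set: S])
  (T_hausdorff : hausdorff_space T) (f_cont : continuous f)
  (f_ldeg : forall x, exists d, local_deg f x d).

Lemma ldegP x : local_deg f x (ldeg f x).
Proof. exact: (xgetPex 0%N (f_ldeg x)). Qed.

Lemma fiber_enum z : exists s : seq S, uniq s /\ forall x, f x = z <-> x \in s.
Proof.
have Uex x : exists U : set S, [/\ open U, U x & forall u, U u -> f u = f x -> u = x].
  by have [U [oU Ux] Uiso] := local_deg_isolated (ldegP x); exists U.
have [U UP] := choice Uex.
pose F := f @^-1` [set z].
have F_compact : compact F.
  apply: subclosed_compact S_compact _ => //; apply: preimage_closed => //.
  exact/accessible_closed_set1/hausdorff_accessible.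
have [D DF FD] := compact_cover_compact F_compact (D := F) (f := U)
  (fun x _ => let: And3 oU _ _ := UP x in oU)
  (fun x Fx => ex_intro2 _ _ x Fx (let: And3 _ Ux _ := UP x in Ux)).
exists D; split; first exact: fset_uniq.
move=> x; split => [fxz|xD]; last by have := DF x xD; rewrite inE.
have [y yD Uyx] := FD x fxz; have := DF y yD; rewrite inE /F /= => fyz.
by have [_ _ /(_ x Uyx) ->] := UP y; rewrite ?fxz.
Qed.

Definition fiber_ldeg_sum (z : T) : nat :=
  xget 0%N [set n | exists s : seq S,
    [/\ uniq s, forall x, f x = z <-> x \in s & n = \sum_(x <- s) ldeg f x]].

Lemma fiber_ldeg_sumE z (s : seq S) : uniq s -> (forall x, f x = z <-> x \in s) ->
  \sum_(x <- s) ldeg f x = fiber_ldeg_sum z.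
Proof.
move=> s_uniq sE; have [t [t_uniq tE]] := fiber_enum z; rewrite /fiber_ldeg_sum.
have [|t' [t'_uniq t'E ->]] := xgetPex 0%N (P := [set n | exists s : seq S,
    [/\ uniq s, forall x, f x = z <-> x \in s & n = \sum_(x <- s) ldeg f x]]).
  by exists (\sum_(x <- t) ldeg f x), t.
by apply/perm_big/uniq_perm => // x; apply/idP/idP => [/sE/t'E|/t'E/sE].
Qed.

(* Separate the points of the fiber by disjoint neighbourhoods, count the
   preimages of a nearby point in each one by [local_deg_fiber], and use the
   compactness of [S] to see that there are no other preimages. *)
Lemma fiber_card_near z : exists2 W : set T, open W /\ W z &
  forall w, W w -> w <> z -> fiber_card f w (fiber_ldeg_sum z).
Proof.
have [s [s_uniq sE]] := fiber_enum z; rewrite -(fiber_ldeg_sumE s_uniq sE).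
have [N [oN Nx N_disj]] := hausdorff_separate_seq s S_hausdorff.
have MWex x : exists MW : set S * set T, x \in s ->
    [/\ open MW.1 /\ MW.1 x, MW.1 `<=` N x, open MW.2 /\ MW.2 z &
      forall w, MW.2 w -> w <> z -> exists t : seq S,
        [/\ uniq t, size t = ldeg f x & forall u, MW.1 u /\ f u = w <-> u \in t]].
  have [xs|_] := boolP (x \in s); last by exists (setT, setT).
  have [U [oU Ux] Ufib] := local_deg_fiber (ldegP x).
  have oUN : open (U `&` N x) := openI oU (oN x).
  have UNx : (U `&` N x) x := conj Ux (Nx x xs).
  have [W] := Ufib _ oUN UNx (fun _ => @proj1 _ _).
  by rewrite (sE x).2 // => Wz Wfib; exists (U `&` N x, W) => _; split => // ? [].
have [MW MWP] := choice MWex.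
pose O := \bigcup_(x in [set` s]) (MW x).1.
have [W0 [oW0 W0z] W0O] : exists2 W0 : set T, open W0 /\ W0 z &
    forall w, W0 w -> f @^-1` [set w] `<=` O.
  apply: proper_fiber_nbhd => //.
    by apply: bigcup_open => x xs; have [[]] := MWP x xs.
  by move=> u /sE us; exists u; last by have [[]] := MWP u us.
exists (W0 `&` \big[setI/setT]_(x <- s) (MW x).2).
  split; first by apply: openI oW0 _; apply: big_setI_open => x xs _; have [_ _ []] := MWP x xs.
  by split => //; apply/big_setI_seqP => x xs _; have [_ _ []] := MWP x xs.
move=> w [W0w /big_setI_seqP Ww] wz.
have tex x : exists t : seq S, x \in s ->
    [/\ uniq t, size t = ldeg f x & forall u, (MW x).1 u /\ f u = w <-> u \in t].
  have [xs|_] := boolP (x \in s); last by exists [::].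
  by have [_ _ _ /(_ w (Ww x xs isT) wz) [t]] := MWP x xs; exists t.
have [t tP] := choice tex.
rewrite (eq_big_seq (fun x => size (t x))) => [|x /tP[] //].
apply: fiber_card_partition (fun x => (MW x).1) _ s_uniq _ _ _ => //.
- move=> x y xs ys xy; apply/seteqP; split => // u [Mxu Myu].
  have [_ MxN _ _] := MWP x xs; have [_ MyN _ _] := MWP y ys.
  by rewrite -(N_disj x y xs ys xy); split; [apply: MxN | apply: MyN].
- by move=> u fuw; have [x] := W0O w W0w u fuw; exists x.
- by move=> x xs; have [] := tP x xs.
Qed.

Hypotheses (T_compact : compact [set: T]) (T_connected : connected [set: T])
  (T_perfect : perfect_set [set: T]).

(* Both sums count the preimages of a point near y and w and distinct from
   both, which exists because T has no isolated points. *)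
Lemma fiber_ldeg_sum_locally_constant y : exists2 W : set T, open W /\ W y &
  forall w, W w -> fiber_ldeg_sum w = fiber_ldeg_sum y.
Proof.
have [W [oW Wy] Wcard] := fiber_card_near y.
exists W => // w Ww; have [-> //|wy] := eqVneq w y.
have [W' [oW' W'w] W'card] := fiber_card_near w.
pose O := W `&` W' `&` ~` [set y].
have oO : open O.
  apply: openI (openI oW oW') (closed_openC _).
  exact/accessible_closed_set1/hausdorff_accessible.
have Ow : O w by split; [split | apply/eqP].
have [a [b [Oa Ob /eqP ab]]] := iffLR perfectTP_ex T_perfect O oO (ex_intro _ w Ow).
have [u [[Wu W'u] uy] uw] : exists2 u, O u & u <> w.
  have [aw|/eqP aw] := eqVneq a w; last by exists a.
  by exists b => // bw; apply: ab; rewrite aw bw.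
exact: fiber_card_unique (W'card u W'u uw) (Wcard u Wu uy).
Qed.

Lemma bdeg_eq (z : T) d :
  (exists B : set T, finite_set B /\ forall y, ~ B y -> fiber_card f y d) -> bdeg f = d.
Proof.
move=> dP; have [B [fB Bcard]] := dP.
have [B0 [fB0 B0card]] := xgetPex 0%N (P := [set d | exists B : set T,
  finite_set B /\ forall y, ~ B y -> fiber_card f y d]) (ex_intro _ d dP).
have fB0B : finite_set (B0 `|` B) by rewrite finite_setU.
have [y nBy] := perfect_cofinite_nonempty z T_hausdorff T_perfect fB0B.
by apply: fiber_card_unique (B0card y _) (Bcard y _) => ?; apply: nBy; [left | right].
Qed.

Lemma fiber_ldeg_sum_bdeg z : fiber_ldeg_sum z = bdeg f.
Proof.
have Wex y : exists W : set T, [/\ open W, W y &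
    forall w, W w -> w <> y -> fiber_card f w (fiber_ldeg_sum y)].
  by have [W [oW Wy] Wcard] := fiber_card_near y; exists W.
have [W WP] := choice Wex.
have [D _ DW] := compact_cover_compact T_compact (D := setT) (f := W)
  (fun y _ => let: And3 oW _ _ := WP y in oW)
  (fun y _ => ex_intro2 _ _ y I (let: And3 _ Wy _ := WP y in Wy)).
symmetry; apply: (bdeg_eq z); exists [set` D]; split; first exact: finite_fset.
move=> y nDy; have [c cD Wcy] := DW y I; have [_ _ Wcard] := WP c.
rewrite (connected_locally_constant T_connected fiber_ldeg_sum_locally_constant z c).
by apply: Wcard => // yc; apply: nDy; rewrite yc.
Qed.

End FiberDegreeSum.

Lemma sphere_fiber_ldeg_sum (S T : topologicalType) (f : S -> T) (z : T) (s : seq S) :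
  is_sphere S -> is_sphere T -> branched_cover f ->
  uniq s -> (forall x, f x = z <-> x \in s) -> \sum_(x <- s) ldeg f x = bdeg f.
Proof.
move=> S_sphere T_sphere [f_cont f_ldeg] s_uniq sE.
have hS := sphere_hausdorff S_sphere; have cS := sphere_compact S_sphere.
have hT := sphere_hausdorff T_sphere.
rewrite (fiber_ldeg_sumE cS hT f_cont f_ldeg s_uniq sE).
exact: (fiber_ldeg_sum_bdeg hS cS hT f_cont f_ldeg (sphere_compact T_sphere)
  (sphere_connected T_sphere) (sphere_perfect T_sphere)).
Qed.

Local Close Scope classical_set_scope.
Local Close Scope ring_scope.

Lemma edge_card (T : tree_of_spheres) (a : {set tV T}) : a \in tE T -> #|a| = 2.
Proof. by case: (tree_ax T) => card2 _ _; apply: card2. Qed.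

Section TreeCover.
Variables (TY TZ : tree_of_spheres) (C : tcover TY TZ).

Lemma edge_deg_at (e' : {set tV TY}) (v' : tV TY) :
  e' \in tE TY -> v' \in e' -> v' \notin tX TY ->
  edge_deg C e' = ldeg (@cf _ _ C v') (@ti _ v' e').
Proof.
move=> e'E v'e' v'X; rewrite /edge_deg; case: pickP => [u /andP [ue' uX]|/(_ v')]; last first.
  by rewrite v'e' v'X.
have [-> //|uv'] := eqVneq u v'.
have e'_def : e' = [set u; v'].
  apply/eqP; rewrite eq_sym eqEcard cards2 uv' edge_card //= andbT.
  by apply/fintype.subsetP => w; rewrite !inE => /orP [] /eqP ->.
by have := deg_ax C uX v'X; rewrite -e'_def => ->.
Qed.

Lemma cover_edge_inj (e' : {set tV TY}) : e' \in tE TY -> {in e' &, injective (cF C)}.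
Proof. by move=> e'E; apply/imset_injP; rewrite !edge_card // edge_ax. Qed.

(* An edge over [e] has exactly one endpoint over each endpoint of [e]. *)
Lemma De_by_vertex (v : tV TZ) (e : {set tV TZ}) : v \in e ->
  De C e = \sum_(v' | cF C v' == v)
             \sum_(e' in Ev (tE TY) v' | cF C @: e' == e) edge_deg C e'.
Proof.
move=> ve; rewrite /De.
transitivity (\sum_(e' | (e' \in tE TY) && (cF C @: e' == e))
                \sum_(v' | (cF C v' == v) && (v' \in e')) edge_deg C e').
  apply: eq_bigr => e' /andP [e'E /eqP Fe'].
  have /imsetP [v' v'e' vF] : v \in cF C @: e' by rewrite Fe'.
  rewrite (big_pred1 v') // => w; apply/andP/eqP => [[/eqP Fw we']|->]; last by rewrite -vF.
  by apply: (cover_edge_inj e'E) => //; rewrite Fw.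
rewrite (exchange_big_dep (fun v' => cF C v' == v)); last by move=> e' v' _ /andP [].
apply: eq_bigr => v' Fv'; apply: eq_bigl => e'.
by rewrite inE Fv' andbAC.
Qed.

Lemma leaf_local_sum (v : tV TZ) (e : {set tV TZ}) (v' : tV TY) :
  e \in Ev (tE TZ) v -> cF C v' = v -> v' \in tX TY ->
  \sum_(e' in Ev (tE TY) v' | cF C @: e' == e) edge_deg C e' = vertex_deg C v'.
Proof.
move=> ev Fv' v'X.
have : v' \in leaves (tE TY) by rewrite mark_ax.
rewrite inE => /cards1P [a v'_edges].
have : v \in leaves (tE TZ) by rewrite mark_ax -Fv' leaf_ax.
rewrite inE => /cards1P [b v_edges].
have aE : a \in Ev (tE TY) v' by rewrite v'_edges set11.
have Fa : cF C @: a = e.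
  have : cF C @: a \in Ev (tE TZ) v.
    by move: aE; rewrite !inE -Fv' => /andP [aE v'a]; rewrite edge_ax //= imset_f.
  by move: ev; rewrite v_edges !inE => /eqP -> /eqP.
rewrite /vertex_deg v'X /=; case: pickP => [a' |/(_ a)]; last by rewrite aE.
rewrite v'_edges inE => /eqP ->; apply: big_pred1 => e'.
by rewrite inE; apply/andP/eqP => [[/eqP ->]|->]; rewrite ?set11 ?Fa ?eqxx.
Qed.

Section InternalVertex.
Variables (v' : tV TY) (e : {set tV TZ}).
Hypotheses (v'X : v' \notin tX TY) (e_at : e \in Ev (tE TZ) (cF C v')).

Let above := [set a in Ev (tE TY) v' | cF C @: a == e].

Lemma internal_fiber x :
  @cf _ _ C v' x = @ti _ (cF C v') e <-> x \in map (@ti _ v') (enum above).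
Proof.
have FX : cF C v' \notin tX TZ by apply: int_ax.
split => [fx|/mapP [a]]; last first.
  by rewrite mem_enum inE => /andP [aE /eqP Fa] ->; rewrite compat_ax // Fa.
have [[a aE xa]|xX] := pselect (@Xv TY v' x); last first.
  have [/(_ _ xX) + _] := cov_ax C v'X; rewrite fx => eX.
  by exfalso; apply: eX; exists e.
rewrite -xa in fx *; apply: map_f; rewrite mem_enum inE aE /=; apply/eqP.
move: fx; rewrite compat_ax // => /(inj_ax FX) -> //.
by move: aE; rewrite !inE => /andP [aE v'a]; rewrite edge_ax //= imset_f.
Qed.

Lemma internal_local_sum :
  \sum_(e' in Ev (tE TY) v' | cF C @: e' == e) edge_deg C e' = vertex_deg C v'.
Proof.
have above_uniq : uniq (map (@ti _ v') (enum above)).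
  rewrite map_inj_in_uniq ?enum_uniq // => a b.
  rewrite !mem_enum !inE => /andP [aE _] /andP [bE _].
  by apply: (inj_ax v'X); rewrite inE.
rewrite /vertex_deg v'X -(sphere_fiber_ldeg_sum (sphere_ax v'X) (sphere_ax (int_ax C v'X))
  (bc_ax C v'X) above_uniq internal_fiber).
rewrite big_map big_enum /=; apply: eq_big => [e'|e']; first by rewrite !inE.
by rewrite !inE => /andP [/andP [e'E v'e'] _]; apply: edge_deg_at.
Qed.

End InternalVertex.

End TreeCover.

Unset Implicit Arguments.

Theorem lemma2p19 (TY TZ : tree_of_spheres) (C : tcover TY TZ)
  (v : tV TZ) (e : {set tV TZ}) :
  e \in Ev (tE TZ) v -> De C e = Dv C v.
Proof.
move=> ev; have ve : v \in e by move: ev; rewrite inE => /andP [].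
rewrite (De_by_vertex C ve) /Dv; apply: eq_bigr => v' /eqP Fv'.
have [v'X|v'X] := boolP (v' \in tX TY); first exact: leaf_local_sum ev Fv' v'X.
by apply: internal_local_sum v'X _; rewrite Fv'.
Qed.
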